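(* Let $n\geq 5$ be an odd integer. Then $\beta_3(J_n)=3n$.
   Context: Flower snark $J_n$ ($n\geq 5$ odd): take $n$ disjoint stars $K_{1,3}$, the $i$th with vertices $T_i=\{a_i,b_i,c_i,d_i\}$, centre $b_i$ and leaves $a_i,c_i,d_i$; add the cycle $a_1a_2\cdots a_na_1$ and the cycle $c_1c_2\cdots c_nd_1d_2\cdots d_nc_1$. $d$ is the shortest-path distance, $d(s,X)=\min_{x\in X}d(s,x)$ for nonempty $X$, $\mathcal{D}_S(X)=(d(s_1,X),\dots,d(s_k,X))$. $S$ is a $\{3\}$-resolving set if $\mathcal{D}_S(X)\neq\mathcal{D}_S(Y)$ for all distinct nonempty vertex sets $X,Y$ with $|X|,|Y|\leq 3$; $\beta_3(J_n)$ is the minimum size of such a set. *)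

From mathcomp Require Import all_boot all_order.
Set Implicit Arguments. Unset Strict Implicit. Unset Printing Implicit Defensive.

(* Vertices of the flower snark J_n: (i, t) with i : 'I_n (0-indexed star
   number) and t : 'I_4 encoding  0 = a_i, 1 = b_i (centre), 2 = c_i, 3 = d_i. *)
Definition vert (n : nat) : finType := ('I_n * 'I_4)%type.

Definition snark_e0 (n : nat) (x y : vert n) : bool :=
  let i := nat_of_ord x.1 in let t := nat_of_ord x.2 in
  let j := nat_of_ord y.1 in let u := nat_of_ord y.2 in
  [||
      [&& t == 1, u != 1 & i == j],
      [&& t == 0, u == 0 & j == (i + 1) %% n],
      (* cycle c_1 ... c_n d_1 ... d_n c_1 *)
      [&& t == 2, u == 2, i + 1 < n & j == i + 1],
      [&& t == 2, u == 3, i + 1 == n & j == 0],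
      [&& t == 3, u == 3, i + 1 < n & j == i + 1]
    | [&& t == 3, u == 2, i + 1 == n & j == 0]].

Definition snark_adj (n : nat) (x y : vert n) : bool :=
  snark_e0 x y || snark_e0 y x.

Fixpoint ball (n : nat) (k : nat) (u : vert n) : {set vert n} :=
  match k with
  | 0 => [set u]
  | k'.+1 => ball k' u :|: [set y | [exists x in ball k' u, snark_adj x y]]
  end.

(* Shortest-path distance: least k with v in ball k u (J_n is connected, so
   this is < #|vert n|; unreachable would give #|vert n|). *)
Definition dist (n : nat) (u v : vert n) : nat :=
  find (fun k => v \in ball k u) (iota 0 #|vert n|).

Definition dist_set (n : nat) (s : vert n) (X : {set vert n}) : nat :=
  \big[minn/#|vert n|]_(x in X) dist s x.

Definition three_resolving (n : nat) (S : {set vert n}) : Prop :=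
  forall X Y : {set vert n},
    X != set0 -> Y != set0 -> #|X| <= 3 -> #|Y| <= 3 -> X != Y ->
    exists2 s, s \in S & dist_set s X != dist_set s Y.

From mathcomp Require Import all_boot all_order zify.
Set Implicit Arguments. Unset Strict Implicit. Unset Printing Implicit Defensive.

(* The leaves a_i, c_i, d_i form a {3}-resolving set.  If x is in X but not
   in Y, a leaf x resolves X and Y at distance 0.  If x = b_i is a centre and
   no leaf resolves them, then each of a_i, c_i, d_i is within distance 1 of
   Y, hence has in its closed neighbourhood a leaf of Y, which lies in X too;
   these closed leaf-neighbourhoods are disjoint, so |X| >= 4.
   Conversely, a {3}-resolving set S misses at most one vertex of each star
   T_i.  Let A_i = {b_(i-1), b_(i+1)}.  A shortest path into a leaf v of T_i
   arrives from a neighbouring star or through b_i, so every s other than v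
   and b_i is at least as close to A_i as to v.  Hence if v and u <> v of T_i
   are both outside S, then S does not resolve A_i from {v} ∪ A_i (u = b_i),
   or {u} ∪ A_i from {v} ∪ A_i (u a leaf; b_i is at distance 1 from both). *)

Section Distance.
Variable n : nat.
Hypothesis n_gt0 : 0 < n.
Local Notation V := (vert n).
Local Notation N := #|vert n|.

Lemma card_vert : N = 4 * n.
Proof. by rewrite /vert card_prod !card_ord mulnC. Qed.

Lemma snark_adjC (x y : V) : snark_adj x y = snark_adj y x.
Proof. by rewrite /snark_adj orbC. Qed.

Lemma ballS k (u y : V) :
  (y \in ball k.+1 u) = (y \in ball k u) || [exists x in ball k u, snark_adj x y].
Proof. by rewrite /= !inE. Qed.

Lemma ball_mono k l (u : V) : k <= l -> ball k u \subset ball l u.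
Proof.
elim: l => [|l IHl]; first by rewrite leqn0 => /eqP ->.
rewrite leq_eqVlt => /predU1P[-> // | /IHl sub_kl].
by apply: subset_trans sub_kl _; apply: subsetUl.
Qed.

Lemma dist_le_card (u v : V) : dist u v <= N.
Proof. by rewrite /dist -[X in _ <= X](size_iota 0 N) find_size. Qed.

Lemma leq_dist k (u v : V) : k < N -> (dist u v <= k) = (v \in ball k u).
Proof.
move=> lt_kN; apply/idP/idP => [le_dk | v_in].
  have lt_dN : dist u v < N := leq_ltn_trans le_dk lt_kN.
  have has_k : has (fun k => v \in ball k u) (iota 0 N) by rewrite has_find size_iota.
  have := nth_find 0 has_k; rewrite nth_iota // add0n => v_in.
  exact: subsetP (ball_mono u le_dk) v v_in.
rewrite leqNgt; apply/negP => lt_kd.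
by have := before_find 0 lt_kd; rewrite nth_iota // add0n v_in.
Qed.

Lemma dist_eq0 (u v : V) : (dist u v == 0) = (v == u).
Proof. by rewrite -leqn0 leq_dist ?inE // card_vert; lia. Qed.

Lemma dist_le1 (u v : V) : (dist u v <= 1) = (v == u) || snark_adj u v.
Proof.
rewrite leq_dist ?card_vert; last by lia.
rewrite ballS inE; congr (_ || _); apply/existsP/idP => [[x] | adj_uv].
  by rewrite inE => /andP[/eqP ->].
by exists u; rewrite inE eqxx.
Qed.

Lemma dist_adj (s z y : V) : snark_adj z y -> dist s y <= (dist s z).+1.
Proof.
move=> adj_zy; have [lt_dN | ] := ltnP (dist s z).+1 N; last first.
  exact: leq_trans (dist_le_card s y).
rewrite leq_dist // ballS; apply/orP; right; apply/existsP; exists z.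
by rewrite -leq_dist ?leqnn ?adj_zy //; exact: ltnW.
Qed.

Lemma dist_pred (s z : V) : z != s -> dist s z < N ->
  exists2 z', snark_adj z' z & (dist s z').+1 <= dist s z.
Proof.
move=> ne_zs lt_dN; have z_in : z \in ball (dist s z) s by rewrite -leq_dist.
case def_d: (dist s z) lt_dN z_in => [|d] lt_dN.
  by move/eqP: def_d; rewrite dist_eq0 (negbTE ne_zs).
have lt_d : d < N by apply: ltnW.
rewrite ballS => /orP[| /existsP[z' /andP[z'_in adj_z'z]]].
  by rewrite -leq_dist // def_d ltnn.
by exists z' => //; rewrite ltnS leq_dist.
Qed.

Lemma dist_set_le (s x : V) (X : {set V}) : x \in X -> dist_set s X <= dist s x.
Proof.
rewrite /dist_set => x_in; elim: (index_enum _) (mem_index_enum x) => //= y r IHr.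
rewrite inE big_cons => /predU1P[<- | x_r]; first by rewrite x_in geq_minl.
by case: (y \in X); rewrite ?geq_min IHr ?orbT.
Qed.

Lemma dist_set_ge m (s : V) (X : {set V}) :
  m <= N -> {in X, forall y, m <= dist s y} -> m <= dist_set s X.
Proof.
by move=> le_mN le_md; apply: (big_ind (leq m)) => // a b; rewrite leq_min => -> ->.
Qed.

Lemma dist_set_le_card (s : V) (X : {set V}) : dist_set s X <= N.
Proof.
apply: (big_ind (fun d => d <= N)) => // [a b le_aN _ | y _]; first by rewrite geq_min le_aN.
exact: dist_le_card.
Qed.

Lemma dist_set_sub (s : V) (X Y : {set V}) :
  {in Y, forall y, dist_set s X <= dist s y} -> dist_set s X <= dist_set s Y.
Proof. exact/dist_set_ge/dist_set_le_card. Qed.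

Lemma dist_setU1_absorb (s v : V) (Z : {set V}) :
  dist_set s Z <= dist s v -> dist_set s (v |: Z) = dist_set s Z.
Proof.
move=> le_Zv; apply/anti_leq/andP; split; apply: dist_set_sub => y.
  by move=> y_in; apply: dist_set_le; rewrite setU1r.
by case/setU1P => [-> // | y_in]; apply: dist_set_le.
Qed.

Lemma leq_dist_set k (s : V) (X : {set V}) :
  k < N -> (dist_set s X <= k) = [exists x in X, dist s x <= k].
Proof.
move=> lt_kN; apply/idP/existsP => [le_k | [x /andP[x_in]]]; last first.
  exact: leq_trans (dist_set_le s x_in).
apply/existsP; move: le_k; apply: contraLR => /existsPn far; rewrite -ltnNge.
by apply: dist_set_ge => // y y_in; move: (far y); rewrite y_in ltnNge.
Qed.

Lemma dist_set_eq0 (s : V) (X : {set V}) : (dist_set s X == 0) = (s \in X).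
Proof.
rewrite -leqn0 leq_dist_set ?card_vert; last by lia.
apply/existsP/idP => [[x /andP[x_in]] | s_in] /=.
  by rewrite leqn0 dist_eq0 => /eqP <-.
by exists s; rewrite s_in leqn0 dist_eq0 eqxx.
Qed.

Lemma dist_set_le1P (s : V) (X : {set V}) :
  reflect (exists2 x, x \in X & (x == s) || snark_adj s x) (dist_set s X <= 1).
Proof.
rewrite leq_dist_set ?card_vert; last by lia.
apply: (iffP existsP) => [[x /andP[x_in]] | [x x_in]] /=.
  by rewrite dist_le1; exists x.
by rewrite -dist_le1 => le_1; exists x; rewrite x_in.
Qed.

Lemma dist_set_eq1 (s x : V) (X : {set V}) :
  s \notin X -> x \in X -> snark_adj s x -> dist_set s X = 1.
Proof.
rewrite -dist_set_eq0 -lt0n => pos x_in adj_sx; apply/eqP; rewrite eqn_leq pos andbT.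
by apply/dist_set_le1P; exists x; rewrite ?adj_sx ?orbT.
Qed.

End Distance.

Lemma three_resolving_eq n (S X Y : {set vert n}) : three_resolving S ->
  X != set0 -> Y != set0 -> #|X| <= 3 -> #|Y| <= 3 ->
  {in S, forall s, dist_set s X = dist_set s Y} -> X = Y.
Proof.
move=> resS X0 Y0 X3 Y3 eqXY; apply/eqP; apply/negPn/negP => neXY.
by have [s /eqXY -> ] := resS X Y X0 Y0 X3 Y3 neXY; rewrite eqxx.
Qed.

Lemma modnS1 n i : i < n -> i.+1 %% n = if i.+1 == n then 0 else i.+1.
Proof. by move=> lt_in; case: eqP => [->|/eqP ne]; rewrite ?modnn ?modn_small //; lia. Qed.

Lemma ordS_val n (i : 'I_n) : ordS i = (if i.+1 == n then 0 else i.+1) :> nat.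
Proof. exact: modnS1. Qed.

Lemma ordS_neq n (i : 'I_n) : 1 < n -> ordS i != i.
Proof. by move=> n_gt1; rewrite -val_eqE /= modnS1 //; case: ifP => /eqP; lia. Qed.

Section Snark.
Variable n : nat.
Hypothesis n_gt2 : 2 < n.
Local Notation V := (vert n).
Let n_gt1 : 1 < n := ltnW n_gt2.
Let n_gt0 : 0 < n := ltnW n_gt1.

Definition leaf (v : V) : bool := v.2 != 1 :> nat.
Definition centre (i : 'I_n) : V := (i, Ordinal (isT : 1 < 4)).
Definition nbr_centres (i : 'I_n) : {set V} := [set centre (ordS i); centre (ord_pred i)].

Lemma centre_inj : injective centre.
Proof. by move=> i j []. Qed.

Lemma leaf_centre (i : 'I_n) : leaf (centre i) = false.
Proof. by []. Qed.

Lemma centre_vertex (v : V) : ~~ leaf v -> v = centre v.1.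
Proof. by case: v => i [t Ht]; rewrite /leaf negbK => /eqP /= t1; congr pair; apply: val_inj. Qed.

Ltac snark_arith :=
  rewrite /leaf /centre /snark_adj /snark_e0 ?xpair_eqE -?val_eqE /= ?addn1 ?ordS_val ?modnS1 //;
  repeat case: ifP; lia.

Lemma adj_centre (i : 'I_n) (y : V) : snark_adj (centre i) y = (y.1 == i) && leaf y.
Proof. by case: i y => [i ?] [[j ?] [[|[|[|[|?]]]] ?]]; snark_arith. Qed.

Lemma adj_leaf_ordS (x y : V) : leaf x -> leaf y -> snark_adj x y ->
  (y.1 == ordS x.1) || (x.1 == ordS y.1).
Proof.
by case: x y => [[i ?] [[|[|[|[|?]]]] ?]] [[j ?] [[|[|[|[|?]]]] ?]]; snark_arith.
Qed.

Lemma star_leaf_nbhds_disjoint (x x' y : V) : x.1 = x'.1 -> leaf x -> leaf x' -> leaf y ->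
  (y == x) || snark_adj x y -> (y == x') || snark_adj x' y -> x = x'.
Proof.
case: x x' y => [[i Hi] [t Ht]] [[i' Hi'] [t' Ht']] [[j Hj] [u Hu]] /= /(congr1 val) /= eq_ii'.
subst i' => lx lx' ly nx nx'; apply: (congr2 pair); first exact: val_inj.
apply: val_inj => /=; move: t Ht t' Ht' u Hu lx lx' ly nx nx'.
by move=> [|[|[|[|?]]]] ? [|[|[|[|?]]]] ? [|[|[|[|?]]]] ? //; snark_arith.
Qed.

Lemma adj_leaf_centre (z : V) : leaf z -> snark_adj z (centre z.1).
Proof. by move=> lz; rewrite snark_adjC adj_centre eqxx. Qed.

Lemma adj_leaf_nbr_centres (x y : V) : leaf x -> leaf y -> snark_adj x y ->
  centre y.1 \in nbr_centres x.1.
Proof.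
move=> lx ly /(adj_leaf_ordS lx ly) /orP[] /eqP def; rewrite !inE def ?eqxx //.
by rewrite ordSK eqxx orbT.
Qed.

Lemma exists_leaf_adj (x : V) : leaf x -> exists2 y, leaf y & snark_adj x y.
Proof.
(* After star n-1 the cycle c_1 ... c_n d_1 ... d_n passes from c- to d-leaves. *)
case: x => [[i Hi] [[|[|[|[|?]]]] Ht]] // _.
- by exists (ordS (Ordinal Hi), Ordinal Ht); snark_arith.
- have [lt_in | ge_in] := ltnP i.+1 n.
    by exists (ordS (Ordinal Hi), Ordinal Ht); snark_arith.
  by exists (ordS (Ordinal Hi), @Ordinal 4 3 isT); snark_arith.
- have [lt_in | ge_in] := ltnP i.+1 n.
    by exists (ordS (Ordinal Hi), Ordinal Ht); snark_arith.
  by exists (ordS (Ordinal Hi), @Ordinal 4 2 isT); snark_arith.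
Qed.

Lemma centre_notin_nbr_centres (i : 'I_n) : centre i \notin nbr_centres i.
Proof.
rewrite !inE !(inj_eq centre_inj) negb_or eq_sym ordS_neq //=.
by rewrite -{1}(ord_predK i) ordS_neq.
Qed.

Lemma leaf_notin_nbr_centres (v : V) (i : 'I_n) : leaf v -> v \notin nbr_centres i.
Proof. by apply: contraL; rewrite !inE => /orP[] /eqP ->. Qed.

Lemma card_nbr_centres (i : 'I_n) : #|nbr_centres i| <= 2.
Proof. by rewrite cards2; case: (_ != _). Qed.

Lemma card_setU1_nbr_centres (v : V) (i : 'I_n) : #|v |: nbr_centres i| <= 3.
Proof.
rewrite cardsU1; have := card_nbr_centres i.
by have := leq_b1 (v \notin nbr_centres i); lia.
Qed.

Lemma nbr_centres_neq0 (i : 'I_n) : nbr_centres i != set0.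
Proof. by apply/set0Pn; exists (centre (ordS i)); rewrite !inE eqxx. Qed.

Lemma dist_nbr_centres_adj (s z v : V) : leaf z -> leaf v -> snark_adj z v ->
  dist_set s (nbr_centres v.1) <= (dist s z).+1.
Proof.
move=> lz lv adj_zv; rewrite snark_adjC in adj_zv.
apply: leq_trans (dist_set_le s (adj_leaf_nbr_centres lv lz adj_zv)) _.
exact/dist_adj/adj_leaf_centre.
Qed.

Lemma dist_nbr_centres_leaf (s w : V) : leaf w ->
  dist_set s (nbr_centres w.1) <= (dist s w).+2.
Proof.
move=> lw; have [y ly adj_wy] := exists_leaf_adj lw.
apply: leq_trans (dist_nbr_centres_adj s ly lw _) _; first by rewrite snark_adjC.
by rewrite ltnS; apply: dist_adj.
Qed.

Lemma dist_nbr_centres_le (s v : V) : leaf v -> s != v -> s != centre v.1 ->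
  dist_set s (nbr_centres v.1) <= dist s v.
Proof.
move=> lv ne_sv ne_sc; rewrite eq_sym in ne_sv.
have [lt_vN | ge_vN] := ltnP (dist s v) #|V|; last first.
  exact: leq_trans (dist_set_le_card _ _) ge_vN.
have [z adj_zv lt_zv] := dist_pred n_gt0 ne_sv lt_vN.
have [lz | /centre_vertex def_z] := boolP (leaf z).
  exact: leq_trans (dist_nbr_centres_adj s lz lv adj_zv) lt_zv.
have {def_z} def_z : z = centre v.1.
  by move: adj_zv; rewrite def_z adj_centre => /andP[/eqP <-].
have ne_zs : z != s by rewrite def_z eq_sym.
have [w adj_wz lt_wz] := dist_pred n_gt0 ne_zs (leq_ltn_trans (ltnW lt_zv) lt_vN).
move: adj_wz; rewrite def_z snark_adjC adj_centre => /andP[/eqP <- lw].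
by apply: leq_trans (dist_nbr_centres_leaf s lw) _; apply: leq_trans lt_zv; rewrite ltnS.
Qed.

Lemma dist_set_setU1_nbr_centres (s v : V) (i : 'I_n) : leaf v -> v.1 = i ->
  s != v -> s != centre i -> dist_set s (v |: nbr_centres i) = dist_set s (nbr_centres i).
Proof. by move=> lv <- ne_sv ne_sc; apply/dist_setU1_absorb/dist_nbr_centres_le. Qed.

Lemma dist_centre_setU1_nbr_centres (v : V) (i : 'I_n) : leaf v -> v.1 = i ->
  dist_set (centre i) (v |: nbr_centres i) = 1.
Proof.
move=> lv vi; apply: (dist_set_eq1 n_gt0 _ (setU11 _ _)); last by rewrite adj_centre vi eqxx.
rewrite in_setU1 negb_or centre_notin_nbr_centres andbT.
by apply: contraTneq lv => <-; rewrite leaf_centre.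
Qed.

Lemma three_resolving_star_uniq (S : {set V}) (u v : V) : three_resolving S ->
  u.1 = v.1 -> u \notin S -> v \notin S -> u = v.
Proof.
move=> resS; wlog lv : u v / leaf v => [gen eq_uv uS vS | eq_uv uS vS].
  have [lv | cv] := boolP (leaf v); first exact: gen.
  have [lu | cu] := boolP (leaf u); first by symmetry; apply: gen.
  by rewrite (centre_vertex cu) (centre_vertex cv) eq_uv.
have S_uv s : s \in S -> (s != u) && (s != v).
  by move=> sS; apply/andP; split; [apply: contraNneq uS | apply: contraNneq vS] => <-.
have neq0 w (B : {set V}) : w |: B != set0 by apply/set0Pn; exists w; rewrite setU11.
set A := nbr_centres v.1.
have [lu | /centre_vertex def_u] := boolP (leaf u).
  have eq_UA : u |: A = v |: A.
    apply: three_resolving_eq resS _ _ _ _ _; rewrite ?neq0 ?card_setU1_nbr_centres //.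
    move=> s /S_uv /andP[ne_su ne_sv].
    have [-> | ne_sc] := eqVneq s (centre v.1).
      by rewrite !dist_centre_setU1_nbr_centres.
    by rewrite !dist_set_setU1_nbr_centres.
  have : u \in v |: A by rewrite -eq_UA setU11.
  by rewrite in_setU1 (negbTE (leaf_notin_nbr_centres _ lu)) orbF => /eqP.
have eq_A : A = v |: A.
  apply: three_resolving_eq resS _ _ _ _ _; rewrite ?neq0 ?nbr_centres_neq0 //.
  - by apply: leq_trans (card_nbr_centres _) _.
  - exact: card_setU1_nbr_centres.
  move=> s /S_uv /andP[ne_su ne_sv].
  by rewrite dist_set_setU1_nbr_centres // -eq_uv -def_u.
by move: (leaf_notin_nbr_centres v.1 lv); rewrite -/A {1}eq_A setU11.
Qed.

Lemma three_resolving_card (S : {set V}) : three_resolving S -> 3 * n <= #|S|.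
Proof.
move=> resS; have inj1 : {in ~: S &, injective (fun v : V => v.1)}.
  by move=> u v; rewrite !inE => uS vS eq_uv; apply: three_resolving_star_uniq eq_uv uS vS.
have : #|~: S| <= n.
  by rewrite -(card_in_imset inj1) -[n in _ <= n]card_ord max_card.
by have := cardsC S; rewrite card_vert; lia.
Qed.

Definition leaves : {set V} := [set v | leaf v].

Lemma card_leaves : #|leaves| = 3 * n.
Proof.
have centres : ~: leaves = centre @: [set: 'I_n].
  apply/setP => v; rewrite !inE; apply/idP/imsetP => [/centre_vertex -> | [i _ ->]].
    by exists v.1.
  by rewrite leaf_centre.
have := cardsC leaves; rewrite centres (card_imset _ centre_inj) cardsT card_ord card_vert.
lia.
Qed.

Lemma star_leaf_reps_card (Z : {set V}) (i : 'I_n) :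
  (forall l, leaf l -> l.1 = i -> exists2 y, y \in Z & leaf y && ((y == l) || snark_adj l y)) ->
  3 <= #|Z|.
Proof.
move=> reps.
have ne y y' (t t' : 'I_4) : (y == (i, t)) || snark_adj (i, t) y ->
    (y' == (i, t')) || snark_adj (i, t') y' -> leaf y -> t != t' ->
    leaf (i, t) -> leaf (i, t') -> y != y'.
  move=> ny ny' ly ne_tt' lt lt'; apply: contraTneq ny' => <-; apply/negP => ny2.
  have := star_leaf_nbhds_disjoint (x := (i, t)) (x' := (i, t')) erefl lt lt' ly ny ny2.
  by case=> eq_tt'; rewrite eq_tt' eqxx in ne_tt'.
have [ya ya_in /andP[lya na]] := reps (i, @Ordinal 4 0 isT) isT erefl.
have [yc yc_in /andP[lyc nc]] := reps (i, @Ordinal 4 2 isT) isT erefl.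
have [yd yd_in /andP[lyd nd]] := reps (i, @Ordinal 4 3 isT) isT erefl.
rewrite cardE; apply: (@uniq_leq_size _ [:: ya; yc; yd]) => [ | y].
  by rewrite /= !inE !negb_or (ne _ _ _ _ na nc) ?(ne _ _ _ _ na nd) ?(ne _ _ _ _ nc nd).
by rewrite mem_enum !inE => /or3P[] /eqP ->.
Qed.

Lemma leaves_separate (X Y : {set V}) (x : V) : x \in X -> x \notin Y -> #|X| <= 3 ->
  exists2 s, s \in leaves & dist_set s X != dist_set s Y.
Proof.
move=> xX xY X3; have [lx | /centre_vertex def_x] := boolP (leaf x).
  exists x; first by rewrite inE.
  by apply: contra xY => /eqP eqXY; rewrite -(dist_set_eq0 n_gt0) -eqXY dist_set_eq0.
apply/exists_inP; apply: contraLR X3 => /exists_inPn same; rewrite -ltnNge.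
have {}same s : leaf s -> dist_set s X = dist_set s Y.
  by move=> ls; apply/eqP; rewrite -[_ == _]negbK same // inE.
have YX y : leaf y -> y \in Y -> y \in X.
  by move=> ly yY; rewrite -(dist_set_eq0 n_gt0) same // dist_set_eq0.
have reps l : leaf l -> l.1 = x.1 ->
    exists2 y, y \in X :&: leaves & leaf y && ((y == l) || snark_adj l y).
  move=> ll lx1; have : dist_set l Y <= 1.
    rewrite -same //; apply: leq_trans (dist_set_le l xX) _.
    by rewrite dist_le1 // {2}def_x snark_adjC adj_centre lx1 eqxx ll orbT.
  case/(dist_set_le1P n_gt0) => y yY n_ly.
  have ly : leaf y.
    apply: contraT => /centre_vertex def_y; move: n_ly; rewrite def_y.
    case/orP => [/eqP def_l | ]; first by rewrite -def_l leaf_centre in ll.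
    rewrite snark_adjC adj_centre => /andP[/eqP l1 _].
    by move: yY; rewrite def_y -l1 lx1 -def_x (negbTE xY).
  by exists y; rewrite ?inE ?YX ?ly.
have lt_X : #|X :&: leaves| < #|X|.
  apply/proper_card/properP; split; first exact: subsetIl.
  by exists x => //; rewrite !inE def_x leaf_centre andbF.
by have := star_leaf_reps_card reps; lia.
Qed.

Lemma leaves_three_resolving : three_resolving leaves.
Proof.
move=> X Y _ _ X3 Y3; rewrite eqEsubset negb_and => /orP[] /subsetPn[x xX xY].
  exact: leaves_separate xX xY X3.
by have [s ls ne] := leaves_separate xX xY Y3; exists s; rewrite // eq_sym.
Qed.

End Snark.

Theorem mainTheorem15 (n : nat) :
  5 <= n -> odd n ->
  (exists S : {set vert n}, three_resolving S /\ #|S| = 3 * n) /\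
  (forall S : {set vert n}, three_resolving S -> 3 * n <= #|S|).
Proof.
move=> n_ge5 _; have n_gt2 : 2 < n by apply: leq_trans n_ge5.
split; first by exists (leaves n); split; [exact: leaves_three_resolving | exact: card_leaves].
by move=> S; apply: three_resolving_card.
Qed.
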